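(* Let $\mathcal C$ be a finite set of vectors in $\mathbb R^N$. Let $\{x_n\}\subset\mathbb R^N_{>0}$ be a partially monotonic sequence such that $\lim_{n\to\infty}x_{n,i}\in\{0,\infty\}$ for at least one $i\in\{1,\dots,N\}$. Let $U=\{i:\lim_{n\to\infty}x_{n,i}=0\}$ and $V=\{j:\lim_{n\to\infty}x_{n,j}=\infty\}$. Suppose $\mathcal C$ is partitioned along $\{x_n\}$ with tiers $T_1,\dots,T_P$ and some constant $C$. Then there exists a conservation relation $w\in\mathbb R^N$ that respects the triple $(U,V,\{T_i\})$.
   Context: For $u\in\mathbb R^N_{\ge0}$, $v\in\mathbb R^N$, $u^v=u_1^{v_1}\cdots u_N^{v_N}$ (with $0^0=1$). A partition of $\mathcal C$ is a collection of nonempty pairwise disjoint subsets with union $\mathcal C$. $\mathcal C$ is partitioned along $\{x_n\}$ if there exist a partition $\{T_i\}_{i=1}^P$ of $\mathcal C$ (tiers) and a constant $C>1$ such that (i) if $y_j,y_k\in T_i$ then $\frac1C x_n^{y_j}\le x_n^{y_k}\le Cx_n^{y_j}$ for all $n$, and (ii) if $y_j\in T_i$, $y_k\in T_{i+m}$ with $m\ge1$, then $x_n^{y_j}/x_n^{y_k}\to\infty$ as $n\to\infty$. A sequence $\{x_n\}\subset\mathbb R^N_{>0}$ is partially monotonic if $x_{n,i}\ge x_{n+1,i}$ for all $n$ for each $i$ with $\liminf_n x_{n,i}=0$, and $x_{n,j}\le x_{n+1,j}$ for all $n$ for each $j$ with $\limsup_n x_{n,j}=\infty$. The positive support of $w\in\mathbb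 R^N$ is $\{i:w_i>0\}$, the negative support is $\{i:w_i<0\}$. For $U,V\subset\{1,\dots,N\}$ with $U\cup V$ nonempty, $w\in\mathbb R^N$ is a conservation relation that respects the triple $(U,V,\{T_i\})$ if $U$ is exactly the positive support of $w$, $V$ is exactly the negative support of $w$, and $w\cdot(y_j-y_\ell)=0$ whenever $y_j,y_\ell$ lie in the same tier $T_i$. *)

From Stdlib Require Import Reals.
From mathcomp Require Import ssreflect ssrbool ssrnat eqtype seq fintype.
Open Scope R_scope.

Definition vec (N : nat) := 'I_N -> R.

(* real power with the convention 0^0 = 1 (and 0^b = 0 for b <> 0);
   for a > 0 it is Rpower a b = exp (b ln a). *)
Definition rpow (a b : R) : R :=
  if Req_EM_T a 0 then (if Req_EM_T b 0 then 1 else 0) else Rpower a b.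

Definition monom {N : nat} (u v : vec N) : R :=
  foldr Rmult 1 (map (fun i => rpow (u i) (v i)) (enum 'I_N)).

Definition dot {N : nat} (w y : vec N) : R :=
  foldr Rplus 0 (map (fun i => w i * y i) (enum 'I_N)).

Definition vsub {N : nat} (y z : vec N) : vec N := fun i => y i - z i.

Definition finite_set {N : nat} (C : vec N -> Prop) : Prop :=
  exists l : list (vec N), forall y, C y <-> List.In y l.

Definition liminf_is_zero (u : nat -> R) : Prop :=
  (forall eps, 0 < eps -> forall M : nat, exists n : nat, (M <= n)%nat /\ u n < eps) /\
  (forall eps, 0 < eps -> exists M : nat, forall n : nat, (M <= n)%nat -> - eps < u n).

Definition limsup_is_infty (u : nat -> R) : Prop :=
  forall B : R, forall M : nat, exists n : nat, (M <= n)%nat /\ B < u n.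

Definition partially_monotonic {N : nat} (x : nat -> vec N) : Prop :=
  (forall i : 'I_N, liminf_is_zero (fun n => x n i) ->
     forall n, x (S n) i <= x n i) /\
  (forall j : 'I_N, limsup_is_infty (fun n => x n j) ->
     forall n, x n j <= x (S n) j).

(* {T_0, ..., T_(P-1)} is a partition of C (tiers indexed 0..P-1 instead of 1..P) *)
Definition is_partition {N : nat} (C : vec N -> Prop) (P : nat)
    (T : nat -> vec N -> Prop) : Prop :=
  (forall k, (k < P)%nat -> exists y, T k y) /\
  (forall k l y, (k < P)%nat -> (l < P)%nat -> T k y -> T l y -> k = l) /\
  (forall y, C y <-> exists k, (k < P)%nat /\ T k y).

Definition partitioned_along {N : nat} (C : vec N -> Prop) (x : nat -> vec N)
    (P : nat) (T : nat -> vec N -> Prop) (Cst : R) : Prop :=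
  is_partition C P T /\ 1 < Cst /\
  (forall k y z, (k < P)%nat -> T k y -> T k z -> forall n,
      / Cst * monom (x n) y <= monom (x n) z /\ monom (x n) z <= Cst * monom (x n) y) /\
  (forall k m y z, (k < P)%nat -> (1 <= m)%nat -> (k + m < P)%nat ->
      T k y -> T (k + m)%nat z ->
      cv_infty (fun n => monom (x n) y / monom (x n) z)).

Definition conservation_relation {N : nat} (U V : 'I_N -> Prop) (P : nat)
    (T : nat -> vec N -> Prop) (w : vec N) : Prop :=
  (exists i, U i \/ V i) /\
  (forall i, 0 < w i <-> U i) /\
  (forall i, w i < 0 <-> V i) /\
  (forall k y z, (k < P)%nat -> T k y -> T k z -> dot w (vsub y z) = 0).

(* Write u_n = -ln x_n coordinatewise.  For y, z in a common tier the monomials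
   x_n^y and x_n^z stay within a constant factor, i.e. u_n . (y - z) is
   bounded.  Under partial monotonicity every coordinate outside U u V stays in
   a compact subinterval of (0, +oo), so u_n is bounded there; hence u_n is
   also bounded against the restriction d of y - z to the coordinates in U u V.
   A linear-algebra "bounded correction" lemma then moves u_n by a bounded
   amount to v_n orthogonal to all (finitely many) such d.  Since u_n tends to
   +oo on U and to -oo on V, for large M the vector v_M is positive on U and
   negative on V, and its restriction w to U u V is the required relation:
   w . (y - z) = v_M . d = 0. *)

From Stdlib Require Import Reals Lra Classical ClassicalEpsilon.
From mathcomp Require Import ssreflect ssrbool ssrnat eqtype seq fintype.
From mathcomp Require Import zify.
Open Scope R_scope.

Definition lsum {I : Type} (l : seq I) (f : I -> R) : R := foldr Rplus 0 (map f l).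

Lemma lsum_nil {I : Type} (f : I -> R) : lsum [::] f = 0.
Proof. by []. Qed.

Lemma lsum_cons {I : Type} (a : I) (l : seq I) (f : I -> R) :
  lsum (a :: l) f = f a + lsum l f.
Proof. by []. Qed.

Lemma lsum_ext {I : Type} (l : seq I) (f g : I -> R) :
  (forall i, f i = g i) -> lsum l f = lsum l g.
Proof. by move=> Hfg; rewrite /lsum (eq_map Hfg). Qed.

Lemma lsum_sub {I : Type} (l : seq I) (f g : I -> R) :
  lsum l (fun i => f i - g i) = lsum l f - lsum l g.
Proof. by elim: l => [|a l IH]; rewrite ?lsum_nil ?lsum_cons ?IH; ring. Qed.

Lemma lsum_scale {I : Type} (l : seq I) (c : R) (f : I -> R) :
  lsum l (fun i => c * f i) = c * lsum l f.
Proof. by elim: l => [|a l IH]; rewrite ?lsum_nil ?lsum_cons ?IH; ring. Qed.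

Lemma lsum_opp {I : Type} (l : seq I) (f : I -> R) :
  lsum l (fun i => - f i) = - lsum l f.
Proof. by elim: l => [|a l IH]; rewrite ?lsum_nil ?lsum_cons ?IH; ring. Qed.

Lemma prod_exp {I : Type} (l : seq I) (f : I -> R) :
  foldr Rmult 1 (map (fun i => exp (f i)) l) = exp (lsum l f).
Proof. by elim: l => [|a l IH] /=; rewrite ?lsum_nil ?lsum_cons ?exp_0 // IH exp_plus. Qed.

Definition bounded (f : nat -> R) : Prop := exists B, forall n, Rabs (f n) <= B.

Lemma bounded_ext (f g : nat -> R) :
  (forall n, f n = g n) -> bounded f -> bounded g.
Proof. by move=> Hfg [B HB]; exists B => n; rewrite -Hfg. Qed.

Lemma bounded_add (f g : nat -> R) :
  bounded f -> bounded g -> bounded (fun n => f n + g n).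
Proof.
move=> [B1 H1] [B2 H2]; exists (B1 + B2) => n.
by apply: Rle_trans (Rabs_triang _ _) _; apply: Rplus_le_compat.
Qed.

Lemma bounded_opp (f : nat -> R) : bounded f -> bounded (fun n => - f n).
Proof. by move=> [B HB]; exists B => n; rewrite Rabs_Ropp. Qed.

Lemma bounded_sub (f g : nat -> R) :
  bounded f -> bounded g -> bounded (fun n => f n - g n).
Proof. by move=> Hf Hg; apply: bounded_add Hf (bounded_opp _ Hg). Qed.

Lemma bounded_mulr (f : nat -> R) (c : R) :
  bounded f -> bounded (fun n => f n * c).
Proof.
move=> [B HB]; exists (B * Rabs c) => n; rewrite Rabs_mult.
exact: Rmult_le_compat_r (Rabs_pos c) (HB n).
Qed.

Lemma bounded_lsum {I : Type} (l : seq I) (f : nat -> I -> R) :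
  (forall i, bounded (fun n => f n i)) -> bounded (fun n => lsum l (f n)).
Proof.
move=> Hf; elim: l => [|a l IH].
  by exists 0 => n; rewrite lsum_nil Rabs_R0; apply: Rle_refl.
exact: bounded_add (Hf a) IH.
Qed.

Lemma Rabs_le_between (a B : R) : Rabs a <= B -> - B <= a <= B.
Proof. by split_Rabs; lra. Qed.

Lemma eventually_pos_of_close (a b : nat -> R) :
  bounded (fun n => a n - b n) -> cv_infty b ->
  exists M, forall n, (M <= n)%coq_nat -> 0 < a n.
Proof.
move=> [B HB] Hb; have [M HM] := Hb B; exists M => n Hn.
have := HM n Hn; have := Rabs_le_between _ _ (HB n); lra.
Qed.

Definition vscale {N : nat} (c : R) (e : vec N) : vec N := fun i => c * e i.

Lemma dotE {N : nat} (w y : vec N) : dot w y = lsum (enum 'I_N) (fun i => w i * y i).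
Proof. by []. Qed.

Lemma dot_vsub_l {N : nat} (a b d : vec N) : dot (vsub a b) d = dot a d - dot b d.
Proof. by rewrite !dotE -lsum_sub; apply: lsum_ext => i; rewrite /vsub; ring. Qed.

Lemma dot_vsub_r {N : nat} (a y z : vec N) : dot a (vsub y z) = dot a y - dot a z.
Proof. by rewrite !dotE -lsum_sub; apply: lsum_ext => i; rewrite /vsub; ring. Qed.

Lemma dot_vscale_l {N : nat} (c : R) (e d : vec N) : dot (vscale c e) d = c * dot e d.
Proof. by rewrite !dotE -lsum_scale; apply: lsum_ext => i; rewrite /vscale; ring. Qed.

Lemma dot_comm {N : nat} (a b : vec N) : dot a b = dot b a.
Proof. by rewrite !dotE; apply: lsum_ext => i; ring. Qed.

Lemma bounded_dot {N : nat} (a : nat -> vec N) (d : vec N) :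
  (forall i, bounded (fun n => a n i)) -> bounded (fun n => dot (a n) d).
Proof. by move=> Ha; apply: bounded_lsum => i; apply: bounded_mulr. Qed.

Definition restrict {N : nat} (S : 'I_N -> Prop) (d : vec N) : vec N :=
  fun i => if excluded_middle_informative (S i) then d i else 0.

Lemma dot_restrict_comm {N : nat} (S : 'I_N -> Prop) (a b : vec N) :
  dot (restrict S a) b = dot a (restrict S b).
Proof.
rewrite !dotE; apply: lsum_ext => i; rewrite /restrict.
by case: excluded_middle_informative => ? /=; ring.
Qed.

Lemma dot_restrict_compl {N : nat} (S : 'I_N -> Prop) (a d : vec N) :
  dot a (restrict S d) = dot a d - dot (restrict (fun i => ~ S i) a) d.
Proof.
rewrite !dotE -lsum_sub; apply: lsum_ext => i; rewrite /restrict.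
by do 2 case: excluded_middle_informative => ? //=; try ring; tauto.
Qed.

Lemma list_select {A : Type} (l : seq A) (Q : A -> Prop) :
  exists l' : seq A, forall a, List.In a l' <-> List.In a l /\ Q a.
Proof.
elim: l => [|b l [l' Hl']]; first by exists [::] => a; split => [|[]].
case: (classic (Q b)) => Qb; [exists (b :: l') | exists l'] => a /=;
  move: (Hl' a); intuition congruence.
Qed.

(* Either some [e] orthogonal to [ds] has [dot e a <> 0] and we subtract the
   right multiple of [e], or [a] is already forced to be orthogonal. *)
Lemma correction_step {N : nat} (u v : nat -> vec N) (ds : seq (vec N)) (a : vec N) :
  bounded (fun n => dot (u n) a) ->
  (forall i, bounded (fun n => v n i - u n i)) ->
  (forall n d, List.In d ds -> dot (v n) d = 0) ->
  exists v' : nat -> vec N,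
    (forall i, bounded (fun n => v' n i - u n i)) /\
    (forall n d, List.In d (a :: ds) -> dot (v' n) d = 0).
Proof.
move=> Hua Hvu Hvds.
case: (classic (exists e : vec N,
          (forall d, List.In d ds -> dot e d = 0) /\ dot e a <> 0))
  => [[e [Heds Hea]] | Hnone]; last first.
  exists v; split => // n d [<- | Hd]; last exact: Hvds.
  apply: NNPP => Hva; apply: Hnone; exists (v n); split => // d'; exact: Hvds.
pose c n := dot (v n) a / dot e a.
have Hc : bounded c.
  apply: bounded_mulr; apply: (bounded_ext (fun n => dot (vsub (v n) (u n)) a + dot (u n) a)).
    by move=> n; rewrite dot_vsub_l; ring.
  by apply: bounded_add Hua; apply: bounded_dot.
exists (fun n => vsub (v n) (vscale (c n) e)); split.
  move=> i; apply: (bounded_ext (fun n => (v n i - u n i) - c n * e i)).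
    by move=> n; rewrite /vsub /vscale; ring.
  exact: bounded_sub (Hvu i) (bounded_mulr _ _ Hc).
move=> n d Hd; rewrite dot_vsub_l dot_vscale_l.
case: Hd => [<- | Hd]; first by rewrite /c; field.
by rewrite Hvds // Heds //; ring.
Qed.

Lemma bounded_correction {N : nat} (u : nat -> vec N) (ds : seq (vec N)) :
  (forall d, List.In d ds -> bounded (fun n => dot (u n) d)) ->
  exists v : nat -> vec N,
    (forall i, bounded (fun n => v n i - u n i)) /\
    (forall n d, List.In d ds -> dot (v n) d = 0).
Proof.
elim: ds => [|a ds IH] Hds.
  exists u; split => // i; exists 0 => n; rewrite Rminus_diag Rabs_R0; exact: Rle_refl.
have [v [Hvu Hvds]] := IH (fun d Hd => Hds d (or_intror Hd)).
by apply: (correction_step u v ds a) => //; apply: Hds; left.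
Qed.

Lemma ln_le_compat (a b : R) : 0 < a -> a <= b -> ln a <= ln b.
Proof. by move=> Ha [Hab | ->]; [left; exact: ln_increasing | right]. Qed.

Lemma upper_bound_of_eventual (f : nat -> R) (M : nat) (a : R) :
  (forall n, (M <= n)%nat -> f n <= a) -> exists B, forall n, f n <= B.
Proof.
elim: M a => [|M IH] a Ha; first by exists a => n; apply: Ha.
apply: (IH (Rmax a (f M))) => n Hn.
have [-> | HMn] : n = M \/ (M < n)%nat by lia.
  exact: Rmax_r.
exact: Rle_trans (Ha n HMn) (Rmax_l _ _).
Qed.

(* A positive sequence bounded below by a positive constant from some index on
   is bounded below by a positive constant (apply the previous lemma to [/ f]). *)
Lemma lower_bound_of_eventual (f : nat -> R) (M : nat) (a : R) :
  (forall n, 0 < f n) -> 0 < a -> (forall n, (M <= n)%nat -> a <= f n) ->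
  exists b, 0 < b /\ forall n, b <= f n.
Proof.
move=> Hpos Ha HM.
have [B HB] : exists B, forall n, / f n <= B.
  apply: (upper_bound_of_eventual _ M (/ a)) => n Hn.
  exact: Rinv_le_contravar Ha (HM n Hn).
have HB0 : 0 < B by apply: Rlt_le_trans (HB 0%nat); apply: Rinv_0_lt_compat.
exists (/ B); split; first exact: Rinv_0_lt_compat.
move=> n; rewrite -(Rinv_inv (f n)).
exact: Rinv_le_contravar (Rinv_0_lt_compat _ (Hpos n)) (HB n).
Qed.

Lemma decreasing_liminf_zero_cv (f : nat -> R) :
  (forall n, 0 < f n) -> Un_decreasing f -> liminf_is_zero f -> Un_cv f 0.
Proof.
move=> Hpos Hdec [Hsmall _] eps Heps.
have [n0 [_ Hn0]] := Hsmall eps Heps 0%nat.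
exists n0 => n Hn; rewrite /R_dist Rminus_0_r Rabs_pos_eq; last exact: Rlt_le.
exact: Rle_lt_trans (decreasing_prop f n0 n Hdec Hn) Hn0.
Qed.

Lemma increasing_limsup_infty_cv (f : nat -> R) :
  Un_growing f -> limsup_is_infty f -> cv_infty f.
Proof.
move=> Hinc Hlarge B; have [n0 [_ Hn0]] := Hlarge B 0%nat.
exists n0 => n Hn; apply: Rlt_le_trans Hn0 _.
exact: Rge_le (growing_prop f n n0 Hinc Hn).
Qed.

Lemma bounded_below_of_not_cv0 (f : nat -> R) :
  (forall n, 0 < f n) -> (liminf_is_zero f -> Un_decreasing f) -> ~ Un_cv f 0 ->
  exists b, 0 < b /\ forall n, b <= f n.
Proof.
move=> Hpos Hmono Hcv.
have Hnl : ~ liminf_is_zero f.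
  by move=> Hl; apply: Hcv; apply: decreasing_liminf_zero_cv => //; apply: Hmono.
apply: NNPP => Hnb; apply: Hnl; split; last first.
  by move=> eps Heps; exists 0%nat => n _; apply: Rlt_trans (Hpos n); lra.
move=> eps Heps M; apply: NNPP => Hno; apply: Hnb.
apply: (lower_bound_of_eventual f M eps Hpos Heps) => n Hn.
by apply: Rnot_lt_le => Hlt; apply: Hno; exists n.
Qed.

Lemma bounded_above_of_not_cv_infty (f : nat -> R) :
  (limsup_is_infty f -> Un_growing f) -> ~ cv_infty f ->
  exists B, forall n, f n <= B.
Proof.
move=> Hmono Hcv.
have Hnl : ~ limsup_is_infty f.
  by move=> Hl; apply: Hcv; apply: increasing_limsup_infty_cv => //; apply: Hmono.
apply: NNPP => Hnb; apply: Hnl => B M; apply: NNPP => Hno; apply: Hnb.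
apply: (upper_bound_of_eventual f M B) => n Hn.
by apply: Rnot_lt_le => Hlt; apply: Hno; exists n.
Qed.

Lemma bounded_ln_between (f : nat -> R) (b B : R) :
  0 < b -> (forall n, b <= f n <= B) -> bounded (fun n => ln (f n)).
Proof.
move=> Hb Hf; exists (Rabs (ln b) + Rabs (ln B)) => n; apply: Rabs_le.
have [Hlo Hhi] := Hf n; have Hfn : 0 < f n by lra.
have := ln_le_compat _ _ Hb Hlo; have := ln_le_compat _ _ Hfn Hhi.
have := Rle_abs (ln B); have := Rle_abs (- ln b); rewrite Rabs_Ropp.
have := Rabs_pos (ln b); have := Rabs_pos (ln B); lra.
Qed.

Lemma cv_infty_ln (f : nat -> R) : cv_infty f -> cv_infty (fun n => ln (f n)).
Proof.
move=> Hf M; have [N0 HN0] := Hf (exp M); exists N0 => n Hn.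
rewrite -(ln_exp M); exact: ln_increasing (exp_pos M) (HN0 n Hn).
Qed.

Lemma cv_infty_opp_ln (f : nat -> R) :
  (forall n, 0 < f n) -> Un_cv f 0 -> cv_infty (fun n => - ln (f n)).
Proof.
move=> Hpos Hf M; have [N0 HN0] := Hf (exp (- M)) (exp_pos _); exists N0 => n Hn.
have Hsmall : f n < exp (- M).
  by have := HN0 n Hn; rewrite /R_dist Rminus_0_r Rabs_pos_eq //; apply: Rlt_le.
have := ln_increasing _ _ (Hpos n) Hsmall; rewrite ln_exp; lra.
Qed.

Lemma not_cv0_and_cv_infty (f : nat -> R) : Un_cv f 0 -> ~ cv_infty f.
Proof.
move=> H0 Hinf; have [N1 HN1] := H0 1 Rlt_0_1; have [N2 HN2] := Hinf 1.
have := HN1 (N1 + N2)%coq_nat ltac:(lia); have := HN2 (N1 + N2)%coq_nat ltac:(lia).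
rewrite /R_dist Rminus_0_r; have := Rle_abs (f (N1 + N2)%coq_nat); lra.
Qed.

Lemma dot_opp_l {N : nat} (a d : vec N) : dot (fun i => - a i) d = - dot a d.
Proof. by rewrite !dotE -lsum_opp; apply: lsum_ext => i; ring. Qed.

Lemma monom_exp {N : nat} (u y : vec N) :
  (forall i, 0 < u i) -> monom u y = exp (dot y (fun i => ln (u i))).
Proof.
move=> Hu; rewrite /monom dotE -prod_exp; congr foldr; apply: eq_map => i.
rewrite /rpow; case: Req_EM_T => [Hu0 | _] //.
by have := Hu i; lra.
Qed.

Lemma log_ratio_bound (C p q : R) :
  1 < C -> 0 < p -> / C * p <= q <= C * p -> Rabs (ln q - ln p) <= ln C.
Proof.
move=> HC Hp [Hlo Hhi]; have HC0 : 0 < C by lra.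
have HiC : 0 < / C by apply: Rinv_0_lt_compat.
have Hq : 0 < q by apply: Rlt_le_trans Hlo; apply: Rmult_lt_0_compat.
have := ln_le_compat _ _ (Rmult_lt_0_compat _ _ HiC Hp) Hlo.
have := ln_le_compat _ _ Hq Hhi.
rewrite !ln_mult // ln_Rinv // => H1 H2; apply: Rabs_le; lra.
Qed.

Lemma tier_constraints {N : nat} (C : vec N -> Prop) (P : nat)
    (T : nat -> vec N -> Prop) (F : vec N -> vec N -> vec N) :
  finite_set C -> is_partition C P T ->
  exists ds : seq (vec N),
    (forall d, List.In d ds ->
       exists k y z, (k < P)%nat /\ T k y /\ T k z /\ d = F y z) /\
    (forall k y z, (k < P)%nat -> T k y -> T k z -> List.In (F y z) ds).
Proof.
move=> [l Hl] [_ [_ HC]].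
have [ds Hds] := list_select (map (fun p => F (fst p) (snd p)) (List.list_prod l l))
  (fun d => exists k y z, (k < P)%nat /\ T k y /\ T k z /\ d = F y z).
exists ds; split => [d /Hds [] // | k y z Hk Ty Tz].
have HinC : forall w, T k w -> List.In w l by move=> w Tw; apply/Hl/HC; exists k.
apply/Hds; split; last by exists k, y, z.
exact: (List.in_map (fun p => F (fst p) (snd p)) _ (y, z)) (List.in_prod _ _ _ _ (HinC y Ty) (HinC z Tz)).
Qed.

Lemma eventually_all {I : eqType} (l : seq I) (Pr : I -> nat -> Prop) :
  (forall i, exists M, forall n, (M <= n)%coq_nat -> Pr i n) ->
  exists M, forall n, (M <= n)%coq_nat -> forall i, i \in l -> Pr i n.
Proof.
move=> HPr; elim: l => [|a l [Ml IH]]; first by exists 0%nat.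
have [Ma Ha] := HPr a; exists (Ma + Ml)%coq_nat => n Hn i.
rewrite in_cons => /orP [/eqP -> | Hi]; [apply: Ha | apply: IH] => //; lia.
Qed.

Definition vanishing {N : nat} (x : nat -> vec N) (i : 'I_N) : Prop :=
  Un_cv (fun n => x n i) 0.
Definition exploding {N : nat} (x : nat -> vec N) (i : 'I_N) : Prop :=
  cv_infty (fun n => x n i).
Definition degenerate {N : nat} (x : nat -> vec N) (i : 'I_N) : Prop :=
  vanishing x i \/ exploding x i.

Definition neglog {N : nat} (x : nat -> vec N) (n : nat) : vec N :=
  fun i => - ln (x n i).

Section Trajectory.

Variables (N : nat) (x : nat -> vec N).
Hypothesis x_pos : forall n i, 0 < x n i.

(* Under partial monotonicity, a non-degenerate coordinate stays in a compact
   subinterval of (0, +oo), so its logarithm is bounded. *)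
Lemma nondegenerate_ln_bounded (i : 'I_N) :
  partially_monotonic x -> ~ degenerate x i -> bounded (fun n => ln (x n i)).
Proof.
move=> [Hdec Hinc] Hnd.
have [b [Hb Hlo]] := bounded_below_of_not_cv0 (fun n => x n i) (fun n => x_pos n i)
  (Hdec i) (fun H => Hnd (or_introl H)).
have [B Hhi] := bounded_above_of_not_cv_infty (fun n => x n i)
  (Hinc i) (fun H => Hnd (or_intror H)).
by apply: (bounded_ln_between _ b B) => // n; split.
Qed.

(* Two exponents in a common tier give a bounded constraint: [neglog x n]
   paired with the degenerate part of their difference stays bounded, since
   the monomials stay within a constant factor and the other coordinates of
   [neglog x n] are bounded. *)
Lemma tier_constraint_bounded (y z : vec N) (Cst : R) :
  partially_monotonic x -> 1 < Cst ->
  (forall n, / Cst * monom (x n) y <= monom (x n) z /\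
             monom (x n) z <= Cst * monom (x n) y) ->
  bounded (fun n => dot (neglog x n) (restrict (degenerate x) (vsub y z))).
Proof.
move=> Hmono HCst Htier.
have Hlog : forall n w, dot (neglog x n) w = - ln (monom (x n) w).
  move=> n w; rewrite monom_exp // ln_exp dot_comm -dot_opp_l.
  by rewrite !dotE; apply: lsum_ext => i; rewrite /neglog; ring.
apply: (bounded_ext (fun n => (ln (monom (x n) z) - ln (monom (x n) y)) -
          dot (restrict (fun i => ~ degenerate x i) (neglog x n)) (vsub y z))).
  by move=> n; rewrite dot_restrict_compl [dot (neglog x n) _]dot_vsub_r !Hlog; ring.
apply: bounded_sub.
  exists (ln Cst) => n; apply: log_ratio_bound => //.
  by rewrite monom_exp //; apply: exp_pos.
apply: bounded_dot => i; rewrite /restrict /neglog.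
case: excluded_middle_informative => Hnd /=.
  exact: bounded_opp (nondegenerate_ln_bounded i Hmono Hnd).
by exists 0 => n; rewrite Rabs_R0; apply: Rle_refl.
Qed.

Lemma eventual_signs (v : nat -> vec N) :
  (forall i, bounded (fun n => v n i - neglog x n i)) ->
  exists M, forall i, (vanishing x i -> 0 < v M i) /\ (exploding x i -> v M i < 0).
Proof.
move=> Hclose.
have Hev : forall i : 'I_N, exists M, forall n, (M <= n)%coq_nat ->
    (vanishing x i -> 0 < v n i) /\ (exploding x i -> v n i < 0).
  move=> i; case: (classic (vanishing x i)) => [Hvan | Hnvan].
    have [M HM] := eventually_pos_of_close _ _ (Hclose i)
      (cv_infty_opp_ln _ (fun n => x_pos n i) Hvan).
    exists M => n Hn; split => [_ | Hexp]; first exact: HM.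
    by case: (not_cv0_and_cv_infty _ Hvan Hexp).
  case: (classic (exploding x i)) => [Hexp | Hnexp]; last by exists 0%nat.
  have Hclose' : bounded (fun n => - v n i - ln (x n i)).
    apply: bounded_ext (bounded_opp _ (Hclose i)) => n; rewrite /neglog; ring.
  have [M HM] := eventually_pos_of_close _ _ Hclose' (cv_infty_ln _ Hexp).
  by exists M => n Hn; split => // _; have := HM n Hn; lra.
have [M HM] := eventually_all (enum 'I_N) _ Hev.
by exists M => i; apply: HM (le_n M) i (mem_enum _ i).
Qed.

End Trajectory.

Lemma restrict_supports {N : nat} (x : nat -> vec N) (a : vec N) :
  (forall i, (vanishing x i -> 0 < a i) /\ (exploding x i -> a i < 0)) ->
  (forall i, 0 < restrict (degenerate x) a i <-> vanishing x i) /\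
  (forall i, restrict (degenerate x) a i < 0 <-> exploding x i).
Proof.
move=> Hsign; split=> i; have [Hpos Hneg] := Hsign i;
  rewrite /restrict; case: excluded_middle_informative => Hdeg /=.
- split=> // Ha; case: Hdeg => // Hexp; have := Hneg Hexp; lra.
- by split=> [Ha | Hvan]; [lra | case: Hdeg; left].
- split=> // Ha; case: Hdeg => // Hvan; have := Hpos Hvan; lra.
- by split=> [Ha | Hexp]; [lra | case: Hdeg; right].
Qed.

Theorem mainTheorem3 (N : nat) (C : vec N -> Prop) (x : nat -> vec N)
    (P : nat) (T : nat -> vec N -> Prop) (Cst : R) :
  finite_set C ->
  (forall n (i : 'I_N), 0 < x n i) ->
  partially_monotonic x ->
  (exists i : 'I_N, Un_cv (fun n => x n i) 0 \/ cv_infty (fun n => x n i)) ->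
  partitioned_along C x P T Cst ->
  exists w : vec N,
    conservation_relation
      (fun i => Un_cv (fun n => x n i) 0)
      (fun j => cv_infty (fun n => x n j))
      P T w.
Proof.
move=> Hfin Hpos Hmono Hdeg [Hpart [HCst [Htier _]]].
have [ds [Hds_tier Hds_all]] :=
  tier_constraints C P T (fun y z => restrict (degenerate x) (vsub y z)) Hfin Hpart.
have [v [Hclose Horth]] : exists v : nat -> vec N,
    (forall i, bounded (fun n => v n i - neglog x n i)) /\
    (forall n d, List.In d ds -> dot (v n) d = 0).
  apply: bounded_correction => d /Hds_tier [k [y [z [Hk [Ty [Tz ->]]]]]].
  exact: tier_constraint_bounded _ _ Hpos _ _ _ Hmono HCst (Htier k y z Hk Ty Tz).
have [M HM] := eventual_signs N x Hpos v Hclose.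
have [Hplus Hminus] := restrict_supports x (v M) HM.
exists (restrict (degenerate x) (v M)); do !split => //.
move=> k y z Hk Ty Tz; rewrite dot_restrict_comm.
exact: Horth (Hds_all k y z Hk Ty Tz).
Qed.
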